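(* Assume $F$ is $K$-smooth with $\ell\in\mathrm{int}(K)$, let $e\in\mathrm{int}(K)$ and $\gamma\in(0,1)$. In Algorithm 6 (with arbitrary choices $e_k\in\mathrm{int}(K)$), every stepsize satisfies $$t_k\ge\min\Big\{\min_{c^*\in C_e}\frac{\gamma\langle c^*,e_k\rangle}{\langle c^*,\ell\rangle},\,1\Big\}.$$
   Context: $K\subset\mathbb{R}^m$ closed convex pointed cone with nonempty interior; $y\preceq_K y'$ iff $y'-y\in K$. $K^*=\{c:\langle c,y\rangle\ge0\ \forall y\in K\}$; $C_e:=\{c^*\in K^*:\langle c^*,e\rangle=1\}$. $F:\mathbb{R}^n\to\mathbb{R}^m$ differentiable with Jacobian $JF$; $K$-smooth with $\ell$: $F(y)-F(x)\preceq_K JF(x)(y-x)+\tfrac12\|y-x\|^2\ell$ $\forall x,y$. Algorithm 6 (generic first-order method): given $x^0$, $\gamma\in(0,1)$, for $k=0,1,\dots$: choose $e_k\in\mathrm{int}(K)$; $d^k:=\arg\min_d\max_{c^*\in C_e}\langle c^*,JF(x^k)d+\tfrac12\|d\|^2e_k\rangle$; if $d^k=0$ stop; otherwise $t_k:=\max\{\gamma^j:j\in\mathbb{N},\ F(x^k+\gamma^jd^k)-F(x^k)\preceq_K\gamma^j(JF(x^k)d^k+\tfrac12\|d^k\|^2e_k)\}$, $x^{k+1}:=x^k+t_kd^k$. *)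

From HB Require Import structures.
From mathcomp Require Import all_boot all_order all_algebra.
From mathcomp Require Import all_classical all_reals all_analysis.
Set Implicit Arguments. Unset Strict Implicit. Unset Printing Implicit Defensive.
Import Order.TTheory GRing.Theory Num.Theory.
Import numFieldNormedType.Exports.
Local Open Scope classical_set_scope.
Local Open Scope ring_scope.

Section Defs.
Variable R : realType.

Definition dotv (m : nat) (u v : 'rV[R]_m) : R := \sum_(i < m) u ord0 i * v ord0 i.
Definition sqn (m : nat) (d : 'rV[R]_m) : R := dotv d d.

Definition Kle (m : nat) (K : set 'rV[R]_m) (y y' : 'rV[R]_m) : Prop := K (y' - y).

Definition cone_set (m : nat) (K : set 'rV[R]_m) : Prop :=
  forall y a, K y -> 0 <= a -> K (a *: y).
Definition convex_cone_set (m : nat) (K : set 'rV[R]_m) : Prop :=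
  forall y z a, K y -> K z -> 0 <= a <= 1 -> K (a *: y + (1 - a) *: z).
Definition pointed (m : nat) (K : set 'rV[R]_m) : Prop :=
  forall y, K y -> K (- y) -> y = 0.

Definition dual_cone (m : nat) (K : set 'rV[R]_m) : set 'rV[R]_m :=
  [set c | forall y, K y -> 0 <= dotv c y].
Definition Cbase (m : nat) (K : set 'rV[R]_m) (e : 'rV[R]_m) : set 'rV[R]_m :=
  [set c | dual_cone K c /\ dotv c e = 1].

(* K-smoothness with constant l, Jacobian JF(x) = 'd F x *)
Definition Ksmooth (n m : nat) (K : set 'rV[R]_m) (F : 'rV[R]_n -> 'rV[R]_m)
    (l : 'rV[R]_m) : Prop :=
  forall x y, Kle K (F y - F x) ('d F x (y - x) + (2^-1 * sqn (y - x)) *: l).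

(* objective of the direction subproblem:
   d |-> max_{c in C_e} <c, JF(x) d + 1/2 ||d||^2 e_k> *)
Definition subobj (n m : nat) (K : set 'rV[R]_m) (e : 'rV[R]_m)
    (F : 'rV[R]_n -> 'rV[R]_m) (x : 'rV[R]_n) (ek : 'rV[R]_m) (d : 'rV[R]_n) : R :=
  sup [set dotv c ('d F x d + (2^-1 * sqn d) *: ek) | c in Cbase K e].

Definition is_argmin (n : nat) (phi : 'rV[R]_n -> R) (d : 'rV[R]_n) : Prop :=
  forall d', phi d <= phi d'.

Definition armijo_set (n m : nat) (K : set 'rV[R]_m) (F : 'rV[R]_n -> 'rV[R]_m)
    (gamma : R) (x d : 'rV[R]_n) (ek : 'rV[R]_m) : set R :=
  [set s | exists j : nat, s = gamma ^+ j /\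
     Kle K (F (x + s *: d) - F x) (s *: ('d F x d + (2^-1 * sqn d) *: ek))].

Definition is_max (A : set R) (t : R) : Prop := A t /\ forall s, A s -> s <= t.

End Defs.

From HB Require Import structures.
From mathcomp Require Import all_boot all_order all_algebra.
From mathcomp Require Import all_classical all_reals all_analysis.
From mathcomp Require Import ring lra.
Import Order.TTheory GRing.Theory Num.Theory.
Import numFieldNormedType.Exports.
Local Open Scope classical_set_scope.
Local Open Scope ring_scope.

(* If t_k = 1 there is nothing to prove.  Otherwise t_k = gamma * s where the
   larger step s = gamma^j failed the Armijo test.  Then e_k - s l lies outside K,
   since K-smoothness would certify s if (s |d_k|^2 / 2) (e_k - s l) were in K.
   Separating e_k - s l from the closed convex cone K, via its nearest point in K,
   yields c in K^* with <c, e_k> < s <c, l>; rescaled into C_e it shows that the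
   infimum of gamma <c, e_k> / <c, l> over C_e lies below gamma s = t_k. *)

Section InnerProduct.
Context {R : realType} {m : nat}.
Implicit Types u v w : 'rV[R]_m.

Lemma dotvC u v : dotv u v = dotv v u.
Proof. by apply: eq_bigr => i _; rewrite mulrC. Qed.

Lemma dotvDr u v w : dotv u (v + w) = dotv u v + dotv u w.
Proof. by rewrite /dotv -big_split; apply: eq_bigr => i _; rewrite mxE mulrDr. Qed.

Lemma dotvZr a u v : dotv u (a *: v) = a * dotv u v.
Proof. by rewrite /dotv mulr_sumr; apply: eq_bigr => i _; rewrite mxE mulrCA. Qed.

Lemma dotvNr u v : dotv u (- v) = - dotv u v.
Proof. by rewrite -scaleN1r dotvZr mulN1r. Qed.

Lemma dotvDl u v w : dotv (u + v) w = dotv u w + dotv v w.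
Proof. by rewrite !(dotvC _ w) dotvDr. Qed.

Lemma dotvZl a u v : dotv (a *: u) v = a * dotv u v.
Proof. by rewrite dotvC dotvZr dotvC. Qed.

Lemma dotvNl u v : dotv (- u) v = - dotv u v.
Proof. by rewrite dotvC dotvNr dotvC. Qed.

Lemma dotv0l v : dotv 0 v = 0.
Proof. by rewrite -(scale0r 0) dotvZl mul0r. Qed.

Lemma sqn_ge0 u : 0 <= sqn u.
Proof. by apply: sumr_ge0 => i _; rewrite -expr2 sqr_ge0. Qed.

Lemma sqr_coord_le_sqn u i : u ord0 i ^+ 2 <= sqn u.
Proof.
rewrite /sqn /dotv (bigD1 i) //= expr2 lerDl.
by apply: sumr_ge0 => j _; rewrite -expr2 sqr_ge0.
Qed.

Lemma sqn_gt0 u : u != 0 -> 0 < sqn u.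
Proof.
move=> u0; have [i ui0] : exists i, u ord0 i != 0.
  apply/existsP; apply: contraNT u0; rewrite negb_exists => /forallP u0.
  by apply/eqP/rowP => i; rewrite mxE; apply/eqP; have := u0 i; rewrite negbK.
by apply: lt_le_trans (sqr_coord_le_sqn u i); rewrite exprn_even_gt0.
Qed.

Lemma sqnZ a u : sqn (a *: u) = a ^+ 2 * sqn u.
Proof. by rewrite /sqn dotvZl dotvZr mulrA -expr2. Qed.

Lemma sqnBZ u v a : sqn (u - a *: v) = sqn u - 2 * a * dotv u v + a ^+ 2 * sqn v.
Proof.
by rewrite /sqn !(dotvDl, dotvDr, dotvNl, dotvNr, dotvZl, dotvZr) (dotvC v u); ring.
Qed.

Lemma normr_le1_sqn u : `|u| <= 1 + sqn u.
Proof.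
rewrite (_ : `|u| = mx_norm u) // mx_normrE; apply/bigmax_leP; split.
  by have := sqn_ge0 u; lra.
move=> [i j] _ /=; rewrite (ord1 i).
have := sqr_coord_le_sqn u j; rewrite -real_normK ?num_real //.
have := normr_ge0 (u ord0 j); set a := `|_|; nra.
Qed.

Lemma sqn_continuous : continuous (@sqn R m).
Proof.
change (continuous (fun u : 'rV[R]_m => \sum_(i < m) u ord0 i * u ord0 i)).
apply: continuous_big => [|i _ u]; first exact: add_continuous.
by apply: continuousM; exact: coord_continuous.
Qed.

End InnerProduct.

Lemma ge0_of_addM_ge0 (R : realFieldType) (a b : R) : 0 <= b ->
  (forall t, 0 < t -> t <= 1 -> 0 <= a + t * b) -> 0 <= a.
Proof.
move=> b0 ab; rewrite leNgt; apply/negP => a0.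
have b1 : 0 < b + 1 by lra.
have [t_le1|] := lerP (- a / (b + 1)) 1.
- have t0 : 0 < - a / (b + 1) by rewrite divr_gt0 // oppr_gt0.
  have := ab _ t0 t_le1.
  have : - a / (b + 1) * (b + 1) = - a by rewrite divfK // gt_eqF.
  set t := - a / (b + 1) in t0 *; nra.
- rewrite ltr_pdivlMr // mul1r => b_lt.
  by have := ab 1 ltr01 (lexx _); lra.
Qed.

Section DualCone.
Context {R : realType} {m : nat} {K : set 'rV[R]_m}.

(* [v - delta *: c] stays in [K] for small [delta], and pairing it with [c]
   costs [delta * sqn c]. *)
Lemma dual_cone_interior_gt0 c v : dual_cone K c -> c != 0 -> K° v -> 0 < dotv c v.
Proof.
move=> Kc c0 /nbhs_ballP[r /= r0 ball_v].
have c_ge0 := normr_ge0 c.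
pose delta := r / (2 * (`|c| + 1)).
have delta0 : 0 < delta by rewrite divr_gt0 //; lra.
have ball_vc : ball v r (v - delta *: c).
  rewrite -ball_normE /= opprB addrC subrK normrZ gtr0_norm //.
  by rewrite /delta mulrAC ltr_pdivrMr; nra.
have := Kc _ (ball_v _ ball_vc); rewrite dotvDr dotvNr dotvZr.
by have := sqn_gt0 _ c0; rewrite /sqn; nra.
Qed.

Lemma Cbase_scale e c : dual_cone K c -> 0 < dotv c e ->
  Cbase K e ((dotv c e)^-1 *: c).
Proof.
move=> Kc ce; split; last by rewrite dotvZl mulVf // gt_eqF.
by move=> y Ky; rewrite dotvZl mulr_ge0 ?invr_ge0 ?(ltW ce) // Kc.
Qed.

Lemma Cbase_ratio_lbound e (gamma : R) v l : 0 <= gamma -> K v -> K l ->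
  has_lbound [set gamma * dotv c v / dotv c l | c in Cbase K e].
Proof.
move=> gamma0 Kv Kl; exists 0 => _ [c [Kc _] <-].
exact: divr_ge0 (mulr_ge0 gamma0 (Kc _ Kv)) (Kc _ Kl).
Qed.

End DualCone.

Section NearestPoint.
Context {R : realType} {m : nat}.
Implicit Types (A : set 'rV[R]_m) (z p v : 'rV[R]_m).

Lemma exists_nearest_point A z : closed A -> A !=set0 ->
  exists2 p, A p & forall y, A y -> sqn (z - p) <= sqn (z - y).
Proof.
move=> Acl [y0 Ay0].
pose phi y := sqn (z - y).
have phi_cont : continuous phi.
  move=> y; have zB : {for y, continuous (fun y : 'rV[R]_m => z - y)}.
    by apply: continuousB; [exact: cst_continuous | exact: cvg_id].
  exact: continuous_comp zB (sqn_continuous _).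
pose B := A `&` [set y | phi y <= phi y0].
have Bcl : closed B.
  apply: closedI => //.
  exact: (continuous_closedP phi).1 phi_cont _ (@closed_le _ (phi y0)).
have Bbd : bounded_set B.
  exists (2 + phi y0 + sqn z); split; first exact: num_real.
  move=> M bound_lt y [_ /= phiy].
  have yE : y = - (z - y) + z by rewrite opprB subrK.
  rewrite yE (le_trans (ler_normD _ _)) // normrN.
  have := normr_le1_sqn (z - y); have := normr_le1_sqn z.
  by rewrite /phi in phiy bound_lt; lra.
have [p Bp pmin] := compact_EVT_min (ex_intro _ y0 (conj Ay0 (lexx _)))
  (bounded_closed_compact Bbd Bcl) (continuous_subspaceT phi_cont).
move: Bp; rewrite inE => -[Ap phip]; exists p => // y Ay.
have [phiy|phiy] := lerP (phi y) (phi y0); first by apply: pmin; rewrite inE.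
exact: le_trans phip (ltW phiy).
Qed.

Lemma nearest_point_variational A z p v :
  (forall y, A y -> sqn (z - p) <= sqn (z - y)) ->
  (forall t, 0 < t -> t <= 1 -> A (p + t *: v)) -> dotv (z - p) v <= 0.
Proof.
move=> pmin Av; suff : 0 <= - (2 * dotv (z - p) v) by lra.
apply: (@ge0_of_addM_ge0 _ _ (sqn v) (sqn_ge0 v)) => t t0 t1.
have := pmin _ (Av t t0 t1); rewrite opprD addrA sqnBZ; nra.
Qed.

End NearestPoint.

Section ConvexCone.
Context {R : realType} {m : nat} {K : set 'rV[R]_m}.
Hypotheses (convK : convex_cone_set K) (coneK : cone_set K).

Lemma cone_add y w : K y -> K w -> K (y + w).
Proof.
move=> Ky Kw.
have half01 : (0 <= 2^-1 :> R) && (2^-1 <= 1 :> R) by apply/andP; split; lra.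
have := coneK _ 2 (convK _ _ _ Ky Kw half01) (ler0n _ 2).
rewrite (_ : 1 - 2^-1 = 2^-1 :> R); last by field.
by rewrite scalerDr !scalerA mulfV ?scale1r // pnatr_eq0.
Qed.

Lemma nearest_point_cone z p : K p ->
  (forall y, K y -> sqn (z - p) <= sqn (z - y)) ->
  (forall y, K y -> dotv (z - p) y <= 0) /\ dotv (z - p) p = 0.
Proof.
move=> Kp pmin.
have normal y : K y -> dotv (z - p) y <= 0.
  move=> Ky; apply: nearest_point_variational pmin _ => t t0 _.
  by apply: cone_add => //; apply: coneK => //; exact: ltW.
split=> //; apply/eqP; rewrite eq_le normal //=.
rewrite -oppr_le0 -dotvNr; apply: nearest_point_variational pmin _ => t _ t1.
by rewrite scalerN -{1}[p]scale1r -scalerBl; apply: coneK => //; rewrite subr_ge0.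
Qed.

Lemma dual_cone_separation z : closed K -> K 0 -> ~ K z ->
  exists2 c, dual_cone K c & dotv c z < 0.
Proof.
move=> Kcl K0 Kz.
have [p Kp pmin] := exists_nearest_point K z Kcl (ex_intro _ 0 K0).
have [normal orth] := nearest_point_cone _ _ Kp pmin.
have zp0 : z - p != 0 by apply/eqP => /subr0_eq zp; apply: Kz; rewrite zp.
exists (p - z) => [y Ky|]; first by rewrite -opprB dotvNl oppr_ge0 normal.
by rewrite -opprB dotvNl -{2}(subrK p z) dotvDr orth addr0 oppr_lt0 sqn_gt0.
Qed.

Lemma inf_Cbase_ratio_lt e l v (gamma s : R) : closed K -> K 0 ->
  K° e -> K° l -> K v -> 0 < gamma -> ~ K (v - s *: l) ->
  inf [set gamma * dotv c v / dotv c l | c in Cbase K e] < gamma * s.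
Proof.
move=> Kcl K0 Ke Kl Kv gamma0 Kvsl.
have [c Kc cvsl] := dual_cone_separation _ Kcl K0 Kvsl.
have c0 : c != 0 by apply: contraTneq cvsl => ->; rewrite dotv0l ltxx.
have ce := dual_cone_interior_gt0 _ _ Kc c0 Ke.
have cl := dual_cone_interior_gt0 _ _ Kc c0 Kl.
have lbound := Cbase_ratio_lbound e gamma v l (ltW gamma0) Kv (interior_subset Kl).
apply: le_lt_trans (ge_inf lbound (ex_intro2 _ _ _ (Cbase_scale _ _ Kc ce) erefl)) _.
have -> : gamma * dotv ((dotv c e)^-1 *: c) v / dotv ((dotv c e)^-1 *: c) l =
    gamma * (dotv c v / dotv c l).
  by rewrite !dotvZl; field; rewrite !gt_eqF.
rewrite ltr_pM2l // ltr_pdivrMr //.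
by move: cvsl; rewrite dotvDr dotvNr dotvZr; lra.
Qed.

Lemma Ksmooth_armijo_step {n : nat} (F : 'rV[R]_n -> 'rV[R]_m) l x d ek (s : R) :
  Ksmooth K F l -> 0 <= s -> K (ek - s *: l) ->
  Kle K (F (x + s *: d) - F x) (s *: ('d F x d + (2^-1 * sqn d) *: ek)).
Proof.
move=> Fsmooth s0 Kek.
have := Fsmooth x (x + s *: d).
rewrite /Kle (_ : x + s *: d - x = s *: d); last by rewrite addrC addKr.
rewrite linearZ /= sqnZ => step.
have coef0 : 0 <= s * (2^-1 * sqn d) by rewrite !mulr_ge0 ?invr_ge0 ?sqn_ge0.
have := cone_add _ _ step (coneK _ _ Kek coef0).
congr K; apply/rowP => i; rewrite !mxE; ring.
Qed.

End ConvexCone.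

Theorem mainTheorem12 (R : realType) (n m : nat) (K : set 'rV[R]_m)
  (F : 'rV[R]_n -> 'rV[R]_m) (l e : 'rV[R]_m) (gamma : R)
  (x : nat -> 'rV[R]_n) (ek : nat -> 'rV[R]_m) (d : nat -> 'rV[R]_n) (t : nat -> R) :
  closed K -> convex_cone_set K -> cone_set K -> pointed K -> K° !=set0 ->
  (forall z, differentiable F z) -> Ksmooth K F l ->
  K° l -> K° e -> 0 < gamma < 1 ->
  (forall k, K° (ek k)) ->
  (forall k, is_argmin (subobj K e F (x k) (ek k)) (d k)) ->
  (forall k, d k != 0 ->
     is_max (armijo_set K F gamma (x k) (d k) (ek k)) (t k) /\
     x k.+1 = x k + t k *: d k) ->
  forall k, (forall i, (i <= k)%N -> d i != 0) ->
    Num.min (inf [set gamma * dotv c (ek k) / dotv c l | c in Cbase K e]) 1 <= t k.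
Proof.
move=> Kcl convK coneK _ [y0 /interior_subset Ky0] _ Fsmooth Kl Ke /andP[gamma0 gamma1]
  Kek _ step k d_neq0.
have K0 : K 0 by rewrite -(scale0r y0); exact: coneK.
have [[[j [tkE _]] tk_max] _] := step k (d_neq0 k (leqnn k)).
rewrite ge_min; case: j => [|j] in tkE *; first by rewrite tkE expr0 lexx orbT.
have not_Kj : ~ K (ek k - gamma ^+ j *: l).
  move=> Kj; have /tk_max : armijo_set K F gamma (x k) (d k) (ek k) (gamma ^+ j).
    exists j; split => //.
    by apply: Ksmooth_armijo_step => //; rewrite exprn_ge0 // ltW.
  by rewrite tkE exprS leNgt gtr_pMl ?exprn_gt0 // gamma1.
rewrite tkE exprS; apply/orP; left; apply/ltW.
by apply: inf_Cbase_ratio_lt => //; exact: interior_subset.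
Qed.
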